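(* (a) Let $C$ and $D$ be cones in $\mathbb{R}^n$ and $x_1,x_2,x_3\in\mathbb{R}^n$ three distinct collinear points with $x_3\notin[x_1,x_2]$. Then the polyhedra $(x_1+C)\cap(x_3+D)$ and $(x_2+C)\cap(x_3+D)$ are homothetic. (b) Let $n\ge2$ and $z\in\mathbb{R}^n$ with $\dim\big(\Diamond_n\cap(z+\Diamond_n)\big)=n$. Then there exists $\epsilon>0$ such that for all $\lambda\in(1-\epsilon,1+\epsilon)$, $$\mathcal{N}\Big(\big(e_n+\mathbb{R}_+(\Diamond_n-e_n)\big)\cap\big(\lambda z-e_n+\mathbb{R}_+(\Diamond_n+e_n)\big)\Big)=\mathcal{N}\Big(\big(e_n+\mathbb{R}_+(\Diamond_n-e_n)\big)\cap\big(z-e_n+\mathbb{R}_+(\Diamond_n+e_n)\big)\Big).$$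
   Context: A cone is a finitely generated pointed polyhedral cone $\mathbb{R}_+x_1+\cdots+\mathbb{R}_+x_k\subset\mathbb{R}^n$ containing no nonzero linear subspace; $\mathbb{R}_+X$ denotes the set of nonnegative linear combinations of elements of $X$. $\Diamond_n=\operatorname{conv}(\pm e_1,\ldots,\pm e_n)\subset\mathbb{R}^n$. For an $n$-dimensional polytope $P\subset\mathbb{R}^n$, its normal fan $\mathcal{N}(P)$ is the fan whose maximal cones are $(\mathbb{R}_+(P-v))^{\circ}$ for $v$ ranging over the vertices of $P$, where $C^{\circ}=\{x:x\cdot y\ge0\text{ for all }y\in C\}$. *)

From HB Require Import structures.
From mathcomp Require Import all_boot all_order all_algebra.
From mathcomp Require Import reals.
Set Implicit Arguments. Unset Strict Implicit. Unset Printing Implicit Defensive.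
Import Order.TTheory GRing.Theory Num.Theory.
Local Open Scope ring_scope.

Section Defs.
Variable R : realType.
Variable n : nat.
Local Notation vec := 'rV[R]_n.

Definition vset := vec -> Prop.

Definition dotv (x y : vec) : R := \sum_(i < n) x 0 i * y 0 i.

(* standard basis vector e_(i+1) (0-based index i) *)
Definition evec (i : nat) : vec := \row_(j < n) (if (j : nat) == i then 1 else 0).

Definition conic_hull (X : vset) : vset := fun y =>
  exists (k : nat) (c : 'I_k -> R) (v : 'I_k -> vec),
    (forall i, X (v i)) /\ (forall i, 0 <= c i) /\ y = \sum_(i < k) c i *: v i.

Definition conv_hull (X : vset) : vset := fun y =>
  exists (k : nat) (c : 'I_k -> R) (v : 'I_k -> vec),
    (forall i, X (v i)) /\ (forall i, 0 <= c i) /\ \sum_(i < k) c i = 1 /\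
    y = \sum_(i < k) c i *: v i.

Definition is_cone (C : vset) : Prop :=
  (exists xs : seq vec, C = conic_hull (fun x => x \in xs)) /\
  (forall L : {vspace vec}, (forall v, v \in L -> C v) -> L = 0%VS).

Definition translate (x : vec) (S : vset) : vset := fun y => exists s, S s /\ y = x + s.

Definition inter (S T : vset) : vset := fun y => S y /\ T y.

Definition homothetic (P Q : vset) : Prop :=
  exists (l : R) (t : vec), 0 < l /\ Q = (fun y => exists x, P x /\ y = l *: x + t).

Definition segment (x1 x2 : vec) : vset := fun y =>
  exists t : R, 0 <= t <= 1 /\ y = (1 - t) *: x1 + t *: x2.

Definition collinear (x1 x2 x3 : vec) : Prop :=
  exists (p d : vec) (s1 s2 s3 : R),
    x1 = p + s1 *: d /\ x2 = p + s2 *: d /\ x3 = p + s3 *: d.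

Definition diamond : vset :=
  conv_hull (fun x => exists i, (i < n)%N /\ (x = evec i \/ x = - evec i)).

Definition aff_indep_pts (k : nat) (S : vset) : Prop :=
  exists (x0 : vec) (X : 'M[R]_(k, n)),
    S x0 /\ (forall i, S (x0 + row i X)) /\ row_free X.

Definition dim_eq (S : vset) (d : nat) : Prop :=
  aff_indep_pts d S /\ ~ aff_indep_pts d.+1 S.

Definition polar (C : vset) : vset := fun x => forall y, C y -> 0 <= dotv x y.

Definition is_vertex (P : vset) (v : vec) : Prop :=
  P v /\ forall (x y : vec) (t : R), P x -> P y -> 0 < t < 1 ->
    v = (1 - t) *: x + t *: y -> x = y.

(* normal fan, represented by its set of maximal cones (R_+(P - v))^o, v a vertex *)
Definition normal_fan (P : vset) : vset -> Prop := fun K =>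
  exists v, is_vertex P v /\ K = polar (conic_hull (fun y => exists p, P p /\ y = p - v)).

End Defs.
Arguments diamond R n : clear implicits.
Arguments evec R n i : clear implicits.

From HB Require Import structures.
From mathcomp Require Import all_boot all_order all_algebra.
From mathcomp Require Import reals.
From mathcomp Require Import boolp.
From mathcomp Require Import ring lra.
Import Order.TTheory GRing.Theory Num.Theory.
Local Open Scope ring_scope.
Set Implicit Arguments. Unset Strict Implicit. Unset Printing Implicit Defensive.

(* (a) Since x3 lies on the line through x1, x2 but outside [x1, x2], we have
   x2 - x3 = l (x1 - x3) with l > 0, and the homothety y |-> x3 + l (y - x3) maps
   x1 + C onto x2 + C while fixing the cone x3 + D.
   (b) Write |y|' for the l1 norm of the coordinates of y other than the n-th. The
   polytope P(w) in the statement is {x : |x|' <= 1 - x_n, |x - w|' <= x_n - w_n + 1}, and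
   for w = lam z it is the Minkowski sum e_n + lam Z + rho (Diamond - e_n), where the
   zonotope Z depends only on z and rho = 1 - lam (z_n + |z|') / 2, provided rho > 0.
   The normal fan of a Minkowski sum of convex sets with positive weights does not
   depend on the weights, and full-dimensionality of Diamond /\ (z + Diamond) forces
   z_n + |z|' < 2, so rho stays positive for lam near 1. *)

Section ConicHull.
Variables (R : realType) (n : nat).
Local Notation vec := 'rV[R]_n.
Implicit Types (X Y : vset R n) (x y : vec).

Lemma conic_hull_ind X Y :
  Y 0 -> (forall a b, Y a -> Y b -> Y (a + b)) ->
  (forall c a, 0 <= c -> Y a -> Y (c *: a)) ->
  (forall y, X y -> Y y) -> forall y, conic_hull X y -> Y y.
Proof.
move=> Y0 YD YZ XY y [k [c [v [Xv [c0 ->]]]]].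
elim: k c v Xv c0 => [|k IH] c v Xv c0; first by rewrite big_ord0.
rewrite big_ord_recr /=; apply: YD; last by apply: YZ => //; apply: XY.
exact: (IH (fun i => c (widen_ord (leqnSn k) i)) (fun i => v (widen_ord (leqnSn k) i))).
Qed.

Lemma conic_hull0 X : conic_hull X 0.
Proof.
exists 0%N, (fun _ => 0), (fun _ => 0); split; first by case.
by split; [case | rewrite big_ord0].
Qed.

Lemma conic_hull_gen X y : X y -> conic_hull X y.
Proof.
move=> Xy; exists 1%N, (fun _ => 1), (fun _ => y).
by do 2!split=> //; rewrite big_ord1 scale1r.
Qed.

Lemma conic_hullZ X c y : 0 <= c -> conic_hull X y -> conic_hull X (c *: y).
Proof.
move=> c0 [k [a [v [Xv [a0 ->]]]]]; exists k, (fun i => c * a i), v.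
do 2!split=> //; first by move=> i; apply: mulr_ge0.
by rewrite scaler_sumr; apply: eq_bigr => i _; rewrite scalerA.
Qed.

Lemma conic_hullD X y1 y2 :
  conic_hull X y1 -> conic_hull X y2 -> conic_hull X (y1 + y2).
Proof.
move=> [k1 [a1 [v1 [X1 [a10 ->]]]]] [k2 [a2 [v2 [X2 [a20 ->]]]]].
exists (k1 + k2)%N, (fun i => match split i with inl j => a1 j | inr j => a2 j end),
  (fun i => match split i with inl j => v1 j | inr j => v2 j end).
split; [|split]; try by move=> i; case: split.
rewrite big_split_ord /=; congr (_ + _); apply: eq_bigr => i _.
  by rewrite (unsplitK (inl i)).
by rewrite (unsplitK (inr i)).
Qed.

Lemma conic_hull_min X Y : (forall y, X y -> conic_hull Y y) ->
  forall y, conic_hull X y -> conic_hull Y y.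
Proof.
by apply: conic_hull_ind; [exact: conic_hull0 | exact: conic_hullD | exact: conic_hullZ].
Qed.

Lemma translateP x (S : vset R n) y : translate x S y <-> S (y - x).
Proof.
split; first by move=> [s [Ss ->]]; rewrite addrC addKr.
by move=> Sy; exists (y - x); split=> //; rewrite addrC subrK.
Qed.

End ConicHull.

Section Vertex.
Variables (R : realType) (n : nat).
Local Notation vec := 'rV[R]_n.
Implicit Types (S T : vset R n) (v : vec).

Definition convex_set S :=
  forall x y t, S x -> S y -> 0 <= t <= 1 -> S ((1 - t) *: x + t *: y).

(* Its polar is the cone of [normal_fan S] at v. *)
Definition feasible_cone S v := conic_hull (fun y => exists p, S p /\ y = p - v).

Definition pointed T := forall d, T d -> T (- d) -> d = 0.

Lemma feasible_cone_convex S v y : convex_set S -> S v -> feasible_cone S v y ->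
  exists s x, 0 <= s /\ S x /\ y = s *: (x - v).
Proof.
move=> cS Sv.
apply: (conic_hull_ind (Y := fun y => exists s x, 0 <= s /\ S x /\ y = s *: (x - v))).
- by exists 0, v; rewrite scale0r.
- move=> a b [s1 [x1 [s10 [S1 ->]]]] [s2 [x2 [s20 [S2 ->]]]].
  have [s0|sn0] := eqVneq (s1 + s2) 0.
    have [-> ->] : s1 = 0 /\ s2 = 0 by lra.
    by exists 0, v; rewrite !scale0r addr0.
  have sp : 0 < s1 + s2 by rewrite lt_def sn0 addr_ge0.
  exists (s1 + s2), ((1 - s2 / (s1 + s2)) *: x1 + (s2 / (s1 + s2)) *: x2).
  split; first exact: addr_ge0.
  split; last by apply/rowP => i; rewrite !mxE; field.
  apply: cS => //; rewrite divr_ge0 ?ler_pdivrMr //=; lra.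
- move=> c a c0 [s [x [s0 [Sx ->]]]]; exists (c * s), x.
  by rewrite scalerA mulr_ge0.
- by move=> _ [p [Sp ->]]; exists 1, p; rewrite scale1r.
Qed.

Lemma vertex_feasible_cone_pointed S v : convex_set S ->
  is_vertex S v -> pointed (feasible_cone S v).
Proof.
move=> cS [Sv Hv] d Td Tnd.
have [s [x [s0 [Sx ed]]]] := feasible_cone_convex cS Sv Td.
have [r [y [r0 [Sy edN]]]] := feasible_cone_convex cS Sv Tnd.
have [//|/eqP dn0] := eqVneq d 0; exfalso.
have sp : 0 < s.
  by rewrite lt_def s0 andbT; apply/eqP => s00; apply: dn0; rewrite ed s00 scale0r.
have rp : 0 < r.
  rewrite lt_def r0 andbT; apply/eqP => r00; apply: dn0.
  by apply: oppr_inj; rewrite edN r00 scale0r oppr0.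
have srp : s + r != 0 by rewrite lt0r_neq0 ?addr_gt0.
have ev : v = (1 - r / (s + r)) *: x + (r / (s + r)) *: y.
  apply/rowP => i; have := congr1 (fun w : vec => w 0 i) edN; rewrite ed !mxE => h.
  have -> : v 0 i = (s * x 0 i + r * y 0 i) / (s + r).
    by rewrite -[LHS](mulfK srp); congr (_ / _); nra.
  by field.
have exy : x = y.
  by apply: Hv ev => //; rewrite divr_gt0 ?addr_gt0 // ltr_pdivrMr ?addr_gt0 //; lra.
subst y; apply: dn0; apply/rowP => i; have := congr1 (fun w : vec => w 0 i) edN.
rewrite ed !mxE => h.
have /eqP : (s + r) * (x 0 i - v 0 i) = 0 by lra.
by rewrite mulf_eq0 (negbTE srp) => /eqP ->; rewrite mulr0.
Qed.

Lemma is_vertex_pointed S v : convex_set S ->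
  is_vertex S v <-> S v /\ pointed (feasible_cone S v).
Proof.
move=> cS; split=> [vS | [Sv Hl]].
  by split; [case: vS | exact: vertex_feasible_cone_pointed].
split=> // x y t Sx Sy /andP[t0 t1] ev.
apply/eqP; rewrite -subr_eq0; apply/eqP/Hl.
  have -> : x - y = t^-1 *: (x - v) by apply/rowP => i; rewrite ev !mxE; field; lra.
  by apply: conic_hullZ; [rewrite invr_ge0 ltW | apply: conic_hull_gen; exists x].
have -> : - (x - y) = (1 - t)^-1 *: (y - v).
  by apply/rowP => i; rewrite ev !mxE; field; lra.
by apply: conic_hullZ; [rewrite invr_ge0; lra | apply: conic_hull_gen; exists y].
Qed.

End Vertex.

Section MinkowskiNormalFan.
Variables (R : realType) (n : nat).
Local Notation vec := 'rV[R]_n.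
Variables A B : vset R n.
Hypotheses (convexA : convex_set A) (convexB : convex_set B).

Definition minkowski (t : vec) (al be : R) : vset R n :=
  fun x => exists a b, A a /\ B b /\ x = t + al *: a + be *: b.

Lemma minkowski_convex t al be : convex_set (minkowski t al be).
Proof.
move=> x y s [a1 [b1 [A1 [B1 ->]]]] [a2 [b2 [A2 [B2 ->]]]] s01.
exists ((1 - s) *: a1 + s *: a2), ((1 - s) *: b1 + s *: b2).
split; first exact: convexA.
split; first exact: convexB.
by apply/rowP => i; rewrite !mxE; ring.
Qed.

(* al (a1 - a) + be (b1 - b) = k (al' (a_mu - a) + be' (b_nu - b)) for the convex
   combinations a_mu, b_nu of a, a1 and of b, b1 chosen below. *)
Lemma feasible_cone_minkowski_sub t al be t' al' be' a b :
  0 < al -> 0 < be -> 0 < al' -> 0 < be' -> A a -> B b ->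
  forall y, feasible_cone (minkowski t al be) (t + al *: a + be *: b) y ->
            feasible_cone (minkowski t' al' be') (t' + al' *: a + be' *: b) y.
Proof.
move=> alp bep alp' bep' Aa Bb.
apply: conic_hull_min => _ [p [[a1 [b1 [A1 [B1 ->]]]] ->]].
pose k := al / al' + be / be'.
have kp : 0 < k by rewrite addr_gt0 // divr_gt0.
pose mu := al / (al' * k); pose nu := be / (be' * k).
have k_mu : k * al' * mu = al by rewrite /mu; field; rewrite !gt_eqF ?mulr_gt0.
have k_nu : k * be' * nu = be by rewrite /nu; field; rewrite !gt_eqF ?mulr_gt0.
have mu01 : 0 <= mu <= 1.
  apply/andP; split; first by rewrite divr_ge0 // ltW // mulr_gt0.
  rewrite ler_pdivrMr ?mulr_gt0 // mul1r.
  rewrite (_ : al' * k = al + al' * (be / be')); last by rewrite /k; field; rewrite !gt_eqF.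
  by rewrite lerDl mulr_ge0 // ltW // divr_gt0.
have nu01 : 0 <= nu <= 1.
  apply/andP; split; first by rewrite divr_ge0 // ltW // mulr_gt0.
  rewrite ler_pdivrMr ?mulr_gt0 // mul1r.
  rewrite (_ : be' * k = be + be' * (al / al')); last by rewrite /k; field; rewrite !gt_eqF.
  by rewrite lerDl mulr_ge0 // ltW // divr_gt0.
have -> : t + al *: a1 + be *: b1 - (t + al *: a + be *: b) =
   k *: ((t' + al' *: ((1 - mu) *: a + mu *: a1) + be' *: ((1 - nu) *: b + nu *: b1))
          - (t' + al' *: a + be' *: b)).
  apply/rowP => i; rewrite !mxE -k_mu -k_nu; ring.
apply: conic_hullZ; first exact: ltW.
apply: conic_hull_gen; eexists; split; last by reflexivity.
exists ((1 - mu) *: a + mu *: a1), ((1 - nu) *: b + nu *: b1).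
by split; [exact: convexA | split; first exact: convexB].
Qed.

Lemma normal_fan_minkowski_sub t al be t' al' be' K :
  0 < al -> 0 < be -> 0 < al' -> 0 < be' ->
  normal_fan (minkowski t al be) K -> normal_fan (minkowski t' al' be') K.
Proof.
move=> alp bep alp' bep' [v [Hv ->]].
have [Sv Hl] := (is_vertex_pointed v (@minkowski_convex t al be)).1 Hv.
have [a [b [Aa [Bb ev]]]] := Sv.
pose v' := t' + al' *: a + be' *: b.
have Teq : feasible_cone (minkowski t al be) v = feasible_cone (minkowski t' al' be') v'.
  by rewrite ev; apply/funext => y; apply/propext; split;
    exact: feasible_cone_minkowski_sub.
exists v'; split; last by rewrite -[conic_hull _]/(feasible_cone _ _) Teq.
apply/(is_vertex_pointed _ (@minkowski_convex t' al' be')).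
by rewrite -Teq; split=> //; exists a, b.
Qed.

Lemma normal_fan_minkowski t al be t' al' be' :
  0 < al -> 0 < be -> 0 < al' -> 0 < be' ->
  normal_fan (minkowski t al be) = normal_fan (minkowski t' al' be').
Proof.
by move=> *; apply/funext => K; apply/propext; split; exact: normal_fan_minkowski_sub.
Qed.

End MinkowskiNormalFan.

Section ConeHomothety.
Variables (R : realType) (n : nat).
Local Notation vec := 'rV[R]_n.

Lemma is_cone_scale (C : vset R n) c v : is_cone C -> 0 <= c -> C v -> C (c *: v).
Proof. by move=> [[xs ->] _]; exact: conic_hullZ. Qed.

Lemma collinear_outside_segment (x1 x2 x3 : vec) :
  collinear x1 x2 x3 -> ~ segment x1 x2 x3 ->
  exists2 l, 0 < l & x2 - x3 = l *: (x1 - x3).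
Proof.
move=> [p [d [s1 [s2 [s3 [-> [-> ->]]]]]]] nseg.
have s13 : s1 - s3 != 0.
  apply/eqP => s13; apply: nseg; exists 0; rewrite lexx ler01 scale0r addr0 subr0 scale1r.
  by split=> //; congr (_ + _ *: _); lra.
have s13sq : 0 < (s1 - s3) ^+ 2 by rewrite exprn_even_gt0.
have prod_gt0 : 0 < (s1 - s3) * (s2 - s3).
  rewrite ltNge; apply/negP => hle; apply: nseg.
  have s12 : s1 - s2 != 0.
    by apply/eqP => s12; move: hle; rewrite (_ : s2 - s3 = s1 - s3) -?expr2; lra.
  have s12sq : 0 < (s1 - s2) ^+ 2 by rewrite exprn_even_gt0.
  exists ((s1 - s3) / (s1 - s2)); split; last first.
    by apply/rowP => i; rewrite !mxE; field.
  have -> : (s1 - s3) / (s1 - s2) = ((s1 - s3) * (s1 - s2)) / (s1 - s2) ^+ 2 by field.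
  apply/andP; split; first by apply: divr_ge0; [nra | exact: ltW].
  rewrite ler_pdivrMr // mul1r expr2; nra.
exists ((s2 - s3) / (s1 - s3)).
  have -> : (s2 - s3) / (s1 - s3) = ((s1 - s3) * (s2 - s3)) / ((s1 - s3) ^+ 2) by field.
  exact: divr_gt0.
by apply/rowP => i; rewrite !mxE; field.
Qed.

Lemma homothetic_inter_translate (C D : vset R n) (x1 x2 x3 : vec) l :
  (forall c v, 0 <= c -> C v -> C (c *: v)) ->
  (forall c v, 0 <= c -> D v -> D (c *: v)) ->
  0 < l -> x2 - x3 = l *: (x1 - x3) ->
  homothetic (inter (translate x1 C) (translate x3 D))
             (inter (translate x2 C) (translate x3 D)).
Proof.
move=> scaleC scaleD lp hx; have ln0 : l != 0 by rewrite gt_eqF.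
have il0 : 0 <= l^-1 by rewrite invr_ge0 ltW.
have ex2 : x2 = x3 + l *: (x1 - x3) by rewrite -hx addrC subrK.
exists l, ((1 - l) *: x3); split=> //.
apply/funext => y; apply/propext; split.
  move=> [/translateP C2 /translateP D3].
  exists (x3 + l^-1 *: (y - x3)); split; last first.
    by apply/rowP => i; rewrite !mxE; field.
  split; apply/translateP.
    have -> : x3 + l^-1 *: (y - x3) - x1 = l^-1 *: (y - x2).
      by rewrite ex2; apply/rowP => i; rewrite !mxE; field.
    exact: scaleC.
  by rewrite addrC addKr; exact: scaleD.
move=> [x [[/translateP C1 /translateP D3] ->]].
split; apply/translateP.
  have -> : l *: x + (1 - l) *: x3 - x2 = l *: (x - x1).
    by rewrite ex2; apply/rowP => i; rewrite !mxE; ring.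
  exact: scaleC (ltW lp) C1.
have -> : l *: x + (1 - l) *: x3 - x3 = l *: (x - x3).
  by apply/rowP => i; rewrite !mxE; ring.
exact: scaleD (ltW lp) D3.
Qed.

End ConeHomothety.

Section CrossPolytope.
Variables (R : realType) (n : nat).
Local Notation vec := 'rV[R]_n.

Definition l1norm (y : vec) : R := \sum_i `|y 0 i|.

Lemma l1normN (y : vec) : l1norm (- y) = l1norm y.
Proof. by apply: eq_bigr => i _; rewrite mxE normrN. Qed.

Lemma l1norm_evec (i : nat) : (i < n)%N -> l1norm (evec R n i) = 1.
Proof.
move=> lt_in; rewrite /l1norm (bigD1 (Ordinal lt_in)) //= mxE eqxx normr1.
rewrite big1 ?addr0 // => j /eqP neq_ji; rewrite mxE.
by case: eqP => [eq_ji|]; [case: neq_ji; apply: val_inj | rewrite normr0].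
Qed.

Lemma diamond_l1norm (d : vec) : diamond R n d -> l1norm d <= 1.
Proof.
move=> [k [c [v [Hv [c0 [<- ->]]]]]].
rewrite /l1norm; under eq_bigr => j _ do rewrite summxE.
apply: (le_trans (ler_sum _ (fun j _ => ler_norm_sum _ _ _))).
rewrite exchange_big /= le_eqVlt; apply/orP; left; apply/eqP; apply: eq_bigr => i _.
have -> : \sum_j `|(c i *: v i) 0 j| = c i * l1norm (v i).
  by rewrite mulr_sumr; apply: eq_bigr => j _; rewrite mxE normrM ger0_norm.
by have [m [lt_mn [->| ->]]] := Hv i; rewrite ?l1normN l1norm_evec // mulr1.
Qed.

Lemma delta_sum (F : 'I_n -> R) (j : 'I_n) :
  \sum_i F i * (if (j : nat) == i then 1 else 0) = F j.
Proof.
rewrite (bigD1 j) //= eqxx mulr1 big1 ?addr0 // => i ij.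
by case: eqP => [/val_inj eq_ji|]; [move: ij; rewrite eq_ji eqxx | rewrite mulr0].
Qed.

(* The convex weights: the positive and negative parts of each coordinate, plus the
   slack 1 - |d|_1 spread evenly over all 2n vertices. *)
Lemma l1norm_diamond (d : vec) : (0 < n)%N -> l1norm d <= 1 -> diamond R n d.
Proof.
move=> n_gt0 hd.
pose r := (1 - l1norm d) / (n + n)%:R.
have r0 : 0 <= r by rewrite divr_ge0 ?subr_ge0 // ler0n.
exists (n + n)%N, (fun k => match split k with inl i => (d 0 i + `|d 0 i|) / 2 + r
                                          | inr i => (`|d 0 i| - d 0 i) / 2 + r end),
  (fun k => match split k with inl i => evec R n i | inr i => - evec R n i end).
split; first by move=> k; case: split => i; exists i; split=> //; [left | right].
split.
  move=> k; case: split => i; rewrite addr_ge0 // divr_ge0 //.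
    by have := ler_norm (- d 0 i); rewrite normrN; lra.
  by have := ler_norm (d 0 i); lra.
split.
  rewrite big_split_ord /=.
  under eq_bigr => i _ do rewrite (unsplitK (inl i)).
  under [X in _ + X]eq_bigr => i _ do rewrite (unsplitK (inr i)).
  rewrite -big_split /= (eq_bigr (fun i : 'I_n => `|d 0 i| + (r + r))); last first.
    by move=> i _; field.
  rewrite big_split /= sumr_const card_ord -mulr_natr /r natrD -/(l1norm d).
  by field; rewrite gt_eqF // addr_gt0 // ltr0n.
apply/rowP => j; rewrite summxE big_split_ord /=.
under eq_bigr => i _ do rewrite (unsplitK (inl i)) !mxE.
under [X in _ + X]eq_bigr => i _ do rewrite (unsplitK (inr i)) !mxE mulrN -mulNr.
by rewrite !delta_sum; field.
Qed.

End CrossPolytope.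

Section AxisCones.
Variables (R : realType) (n : nat) (N : 'I_n).
Local Notation vec := 'rV[R]_n.
Local Notation E := (evec R n N).

Lemma evecE (i : 'I_n) : E 0 i = (i == N)%:R.
Proof. by rewrite mxE -val_eqE; case: eqP. Qed.

Definition lateral_norm (y : vec) : R := \sum_(i < n | i != N) `|y 0 i|.

Lemma lateral_norm_ge0 (y : vec) : 0 <= lateral_norm y.
Proof. exact: sumr_ge0. Qed.

Lemma l1norm_lateral (y : vec) : l1norm y = lateral_norm y + `|y 0 N|.
Proof. by rewrite /l1norm (bigD1 N) //= addrC. Qed.

Lemma lateral_normD (x y : vec) : lateral_norm (x + y) <= lateral_norm x + lateral_norm y.
Proof. by rewrite -big_split; apply: ler_sum => i _; rewrite mxE ler_normD. Qed.

Lemma lateral_normZ c (y : vec) : 0 <= c -> lateral_norm (c *: y) = c * lateral_norm y.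
Proof.
by move=> c0; rewrite mulr_sumr; apply: eq_bigr => i _; rewrite mxE normrM ger0_norm.
Qed.

Lemma lateral_norm_axisD c (y : vec) : lateral_norm (y + c *: E) = lateral_norm y.
Proof.
by apply: eq_bigr => i /negbTE iN; rewrite 2!mxE evecE iN mulr0 addr0.
Qed.

Section SignedAxis.
Variable s : R.
Hypothesis norm_s : `|s| = 1.

Lemma sqr_unit_norm : s * s = 1.
Proof. by rewrite -expr2 -real_normK ?num_real // norm_s expr1n. Qed.

Lemma conic_hull_axis_diamond_le (y : vec) :
  conic_hull (translate (s *: E) (diamond R n)) y -> lateral_norm y <= s * y 0 N.
Proof.
apply: (conic_hull_ind (Y := fun y : vec => lateral_norm y <= s * y 0 N)).
- by rewrite /lateral_norm big1 => [|i _]; rewrite mxE ?normr0 ?mulr0.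
- move=> a b ha hb; rewrite mxE mulrDr.
  by apply: le_trans (lateral_normD a b) _; exact: lerD.
- by move=> c a c0 ha; rewrite lateral_normZ // mxE mulrCA ler_wpM2l.
move=> _ [d [Dd ->]].
rewrite addrC lateral_norm_axisD 2!mxE evecE eqxx mulr1 mulrDr.
have := diamond_l1norm Dd; rewrite l1norm_lateral.
have := ler_norm (- (s * d 0 N)); rewrite normrN normrM norm_s mul1r.
have := sqr_unit_norm; lra.
Qed.

Lemma axis_diamond_conic_hull (y : vec) :
  lateral_norm y <= s * y 0 N -> conic_hull (translate (s *: E) (diamond R n)) y.
Proof.
move=> hy; have lat_ge0 := lateral_norm_ge0 y.
have ss := sqr_unit_norm.
have [t0|tn0] := eqVneq (s * y 0 N) 0.
  suff -> : y = 0 by exact: conic_hull0.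
  have yN : y 0 N = 0 by rewrite -[y 0 N]mul1r -ss -mulrA t0 mulr0.
  have lat0 : lateral_norm y = 0 by lra.
  apply/rowP => i; rewrite mxE; have [->//|iN] := eqVneq i N.
  by apply/normr0_eq0; apply: (psumr_eq0P _ lat0).
set t := s * y 0 N in tn0 hy.
have tp : 0 < t by rewrite lt_def tn0; lra.
have yN : y 0 N = s * t by rewrite /t mulrA ss mul1r.
have -> : y = t *: (s *: E + (t^-1 *: y - s *: E)).
  by apply/rowP => i; rewrite !mxE; field.
apply: conic_hullZ (ltW tp) _; apply: conic_hull_gen.
exists (t^-1 *: y - s *: E); split=> //.
apply: l1norm_diamond; first exact: leq_ltn_trans (leq0n N) (ltn_ord N).
rewrite l1norm_lateral -scaleNr lateral_norm_axisD lateral_normZ; last first.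
  by rewrite invr_ge0 ltW.
rewrite 3!mxE evecE eqxx mulr1 yN mulrCA mulVf // mulr1 addrN normr0 addr0.
by rewrite mulrC ler_pdivrMr // mul1r.
Qed.

Lemma conic_hull_axis_diamondP (y : vec) :
  conic_hull (translate (s *: E) (diamond R n)) y <-> lateral_norm y <= s * y 0 N.
Proof.
by split; [exact: conic_hull_axis_diamond_le | exact: axis_diamond_conic_hull].
Qed.

End SignedAxis.

Definition cones_cap (w : vec) : vset R n :=
  inter (translate E (conic_hull (translate (- E) (diamond R n))))
        (translate (w - E) (conic_hull (translate E (diamond R n)))).

Lemma cones_capP (w x : vec) : cones_cap w x <->
  lateral_norm x <= 1 - x 0 N /\ lateral_norm (x - w) <= x 0 N - w 0 N + 1.
Proof.
have lower := @conic_hull_axis_diamondP (-1) (normrN1 R).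
have upper := @conic_hull_axis_diamondP 1 (normr1 R).
rewrite scaleN1r scale1r in lower upper.
rewrite /cones_cap /inter !translateP lower upper.
have -> : lateral_norm (x - E) = lateral_norm x.
  by rewrite -scaleN1r lateral_norm_axisD.
have -> : lateral_norm (x - (w - E)) = lateral_norm (x - w).
  by rewrite opprB addrCA addrC -[E]scale1r lateral_norm_axisD.
by rewrite !mxE eqxx mulN1r mul1r; split=> -[h1 h2]; split; lra.
Qed.

End AxisCones.

Section SegmentParameter.
Variable R : realType.

Definition seg_param (u q : R) : R :=
  if q == 0 then 0 else if u / q <= 0 then 0 else if 1 <= u / q then 1 else u / q.

(* [seg_param u q * q] is the point of the segment [0, q] nearest to [u]. *)
Lemma seg_paramP (u q : R) : let t := seg_param u q in
  [/\ 0 <= t <= 1, `|u| = t * `|q| + `|u - t * q| &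
      `|u - q| = (1 - t) * `|q| + `|u - t * q|].
Proof.
rewrite /seg_param; have [->|q0] := eqVneq q 0.
  by rewrite !mul0r !subr0 normr0 !mulr0 !add0r lexx ler01.
have eu : u = (u / q) * q by rewrite divfK.
move: (u / q) eu => r eu.
have key t : 0 <= t <= 1 -> `|r| = t + `|r - t| -> `|r - 1| = (1 - t) + `|r - t| ->
    [/\ 0 <= t <= 1, `|u| = t * `|q| + `|u - t * q| &
        `|u - q| = (1 - t) * `|q| + `|u - t * q|].
  move=> t01 h1 h2.
  have -> : u - t * q = (r - t) * q by rewrite eu mulrBl.
  have -> : u - q = (r - 1) * q by rewrite eu mulrBl mul1r.
  by rewrite [in `|u|]eu !normrM -!mulrDl -h1 -h2.
have [r0|r0] := lerP r 0.
  apply: key; rewrite ?lexx ?ler01 ?subr0 ?add0r //.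
  by rewrite (ler0_norm r0) ler0_norm; lra.
have [r1|r1] := lerP 1 r.
  apply: key; rewrite ?lexx ?ler01 ?subrr ?add0r //.
  by rewrite !ger0_norm; lra.
apply: key; first by rewrite !ltW.
  by rewrite subrr normr0 addr0 gtr0_norm.
by rewrite subrr normr0 addr0 ltr0_norm ?subr_lt0 // opprB.
Qed.

Lemma norm_convex_comb (u v s : R) : 0 <= s <= 1 ->
  `|(1 - s) * u + s * v| <= (1 - s) * `|u| + s * `|v|.
Proof.
move=> /andP[s0 s1]; apply: le_trans (ler_normD _ _) _.
by rewrite !normrM (ger0_norm s0) ger0_norm ?subr_ge0.
Qed.

End SegmentParameter.

Section Decomposition.
Variables (R : realType) (n : nat) (N : 'I_n) (z : 'rV[R]_n).
Local Notation vec := 'rV[R]_n.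
Local Notation E := (evec R n N).
Local Notation lateral_norm := (lateral_norm N).

(* The Minkowski sum of the segments [0, z_i e_i - |z_i| e_N], i <> N. *)
Definition zonotope : vset R n := fun a =>
  exists t : 'I_n -> R, (forall i, 0 <= t i <= 1) /\
  forall i, a 0 i = if i == N then - \sum_(j < n | j != N) t j * `|z 0 j| else t i * z 0 i.

(* The cross-polytope translated by - e_N. *)
Definition lowered_diamond : vset R n := fun b => lateral_norm b + `|b 0 N + 1| <= 1.

Lemma zonotope_convex : convex_set zonotope.
Proof.
move=> a1 a2 s [t1 [t1_01 h1]] [t2 [t2_01 h2]] /andP[s0 s1].
exists (fun i => (1 - s) * t1 i + s * t2 i); split.
  move=> i; have /andP[? ?] := t1_01 i; have /andP[? ?] := t2_01 i.
  by apply/andP; split; nra.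
move=> i; rewrite !mxE h1 h2; case: (i == N); last by ring.
rewrite mulrN -mulrN -!sumrN !mulr_sumr -big_split /=.
by apply: eq_bigr => j _; ring.
Qed.

Lemma lowered_diamond_convex : convex_set lowered_diamond.
Proof.
move=> b1 b2 s h1 h2 s01; have /andP[s0 s1] := s01.
have hL : lateral_norm ((1 - s) *: b1 + s *: b2) <=
          (1 - s) * lateral_norm b1 + s * lateral_norm b2.
  by rewrite !mulr_sumr -big_split; apply: ler_sum => i _; rewrite !mxE norm_convex_comb.
have hN : `|((1 - s) *: b1 + s *: b2) 0 N + 1| <=
          (1 - s) * `|b1 0 N + 1| + s * `|b2 0 N + 1|.
  rewrite !mxE (_ : _ + _ + 1 = (1 - s) * (b1 0 N + 1) + s * (b2 0 N + 1)); last by ring.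
  exact: norm_convex_comb.
have s1' : 0 <= 1 - s by rewrite subr_ge0.
have := ler_wpM2l s1' h1; have := ler_wpM2l s0 h2.
rewrite /lowered_diamond !mulrDr !mulr1; lra.
Qed.

Definition diamond_weight (lam : R) : R := 1 - lam * (z 0 N + lateral_norm z) / 2.

Lemma diamond_weight_gt0 lam : lam * (z 0 N + lateral_norm z) < 2 -> 0 < diamond_weight lam.
Proof. by rewrite /diamond_weight; lra. Qed.

Lemma cones_cap_sub_minkowski lam x :
  0 < lam -> 0 < diamond_weight lam -> cones_cap N (lam *: z) x ->
  minkowski zonotope lowered_diamond E lam (diamond_weight lam) x.
Proof.
set rho := diamond_weight lam => lp rp /cones_capP [h1 h2].
have rhoE : rho = 1 - lam * (z 0 N + lateral_norm z) / 2 by [].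
have rn0 : rho != 0 by rewrite gt_eqF.
pose t i := seg_param (x 0 i) (lam * z 0 i).
pose T := \sum_(j < n | j != N) t j * `|z 0 j|.
pose a : vec := \row_i (if i == N then - T else t i * z 0 i).
pose b : vec := rho^-1 *: (x - E - lam *: a).
exists a, b; split.
  exists t; split; first by move=> i; have [] := seg_paramP (x 0 i) (lam * z 0 i).
  by move=> i; rewrite mxE.
split; last by apply/rowP => i; rewrite /b !mxE; field.
pose M := \sum_(i < n | i != N) `|x 0 i - t i * (lam * z 0 i)|.
have lat_x : lateral_norm x = lam * T + M.
  rewrite /T /M mulr_sumr -big_split /=; apply: eq_bigr => i _.
  have [_ -> _] := seg_paramP (x 0 i) (lam * z 0 i).
  by rewrite normrM (gtr0_norm lp) /t; ring.
have lat_xz : lateral_norm (x - lam *: z) = lam * (lateral_norm z - T) + M.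
  rewrite /T /M mulrBr !mulr_sumr -sumrB -big_split /=; apply: eq_bigr => i _.
  have [_ _] := seg_paramP (x 0 i) (lam * z 0 i); rewrite !mxE => ->.
  by rewrite normrM (gtr0_norm lp) /t; ring.
have lat_b : lateral_norm b = rho^-1 * M.
  rewrite /M mulr_sumr; apply: eq_bigr => i /negbTE iN.
  rewrite /b !mxE iN -[(i : nat) == N]/(i == N) iN.
  by rewrite normrM gtr0_norm ?invr_gt0 //; congr (_ * `|_|); ring.
have bN : b 0 N + 1 = rho^-1 * (x 0 N - 1 + lam * T + rho).
  by rewrite /b !mxE !eqxx; field.
rewrite /lowered_diamond lat_b bN normrM gtr0_norm ?invr_gt0 // -mulrDr mulrC.
rewrite ler_pdivrMr // mul1r.
rewrite lat_x in h1; rewrite lat_xz mxE in h2.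
have : `|x 0 N - 1 + lam * T + rho| <= rho - M.
  by rewrite ler_norml; apply/andP; split; lra.
lra.
Qed.

Lemma minkowski_sub_cones_cap lam x :
  0 < lam -> 0 < diamond_weight lam ->
  minkowski zonotope lowered_diamond E lam (diamond_weight lam) x -> cones_cap N (lam *: z) x.
Proof.
set rho := diamond_weight lam => lp rp [a [b [[t [t01 ha]] [hb ->]]]].
have rhoE : rho = 1 - lam * (z 0 N + lateral_norm z) / 2 by [].
set T := \sum_(j < n | j != N) t j * `|z 0 j| in ha.
apply/cones_capP.
have xN : (E + lam *: a + rho *: b) 0 N = 1 - lam * T + rho * b 0 N.
  by rewrite !mxE eqxx ha eqxx; ring.
have lat_x : lateral_norm (E + lam *: a + rho *: b) <= lam * T + rho * lateral_norm b.
  rewrite /T !mulr_sumr -big_split /=; apply: ler_sum => i /negbTE iN.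
  rewrite !mxE ha iN -[(i : nat) == N]/(i == N) iN add0r.
  apply: le_trans (ler_normD _ _) _; rewrite !normrM (gtr0_norm lp) (gtr0_norm rp).
  by have /andP[t0 _] := t01 i; rewrite (ger0_norm t0).
have lat_xz : lateral_norm (E + lam *: a + rho *: b - lam *: z) <=
              lam * (lateral_norm z - T) + rho * lateral_norm b.
  rewrite /T mulrBr !mulr_sumr -sumrB -big_split /=; apply: ler_sum => i /negbTE iN.
  rewrite !mxE ha iN -[(i : nat) == N]/(i == N) iN add0r.
  have /andP[t0 t1] := t01 i.
  rewrite (_ : lam * (t i * z 0 i) + rho * b 0 i - lam * z 0 i =
               rho * b 0 i + (lam * (1 - t i)) * (- z 0 i)); last by ring.
  apply: le_trans (ler_normD _ _) _.
  have lt_ge0 : 0 <= lam * (1 - t i) by rewrite mulr_ge0 ?subr_ge0 // ltW.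
  rewrite [`|rho * _|]normrM [`|_ * - _|]normrM normrN (gtr0_norm rp) (ger0_norm lt_ge0).
  lra.
have bN1 := ler_norm (b 0 N + 1).
have bN2 := ler_norm (- (b 0 N + 1)); rewrite normrN in bN2.
have lat_b := lateral_norm_ge0 N b; rewrite /lowered_diamond in hb.
have q1 : 0 <= rho * (- (lateral_norm b + b 0 N)) by apply: mulr_ge0; lra.
have q2 : 0 <= rho * (2 + b 0 N - lateral_norm b) by apply: mulr_ge0; lra.
rewrite xN [(lam *: z) 0 N]mxE; split; lra.
Qed.

Lemma cones_cap_minkowski lam : 0 < lam -> 0 < diamond_weight lam ->
  cones_cap N (lam *: z) = minkowski zonotope lowered_diamond E lam (diamond_weight lam).
Proof.
move=> lp rp; apply/funext => x; apply/propext.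
by split; [exact: cones_cap_sub_minkowski | exact: minkowski_sub_cones_cap].
Qed.

End Decomposition.

Section FullDimension.
Variables (R : realType) (n : nat).
Local Notation vec := 'rV[R]_n.

Lemma dotvD (s x y : vec) : dotv s (x + y) = dotv s x + dotv s y.
Proof. by rewrite /dotv -big_split; apply: eq_bigr => i _; rewrite mxE mulrDr. Qed.

Lemma dotvN (s x : vec) : dotv s (- x) = - dotv s x.
Proof. by rewrite /dotv -sumrN; apply: eq_bigr => i _; rewrite mxE mulrN. Qed.

Lemma dotv_le_l1norm (s x : vec) : (forall i, `|s 0 i| <= 1) -> dotv s x <= l1norm x.
Proof.
move=> s_le1; apply: ler_sum => i _; apply: le_trans (ler_norm _) _.
by rewrite normrM ler_piMl.
Qed.

Lemma aff_indep_pts_hyperplane (S : vset R n) (s : vec) c :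
  aff_indep_pts n S -> (forall x, S x -> dotv s x = c) -> s = 0.
Proof.
move=> [x0 [X [Sx0 [Srow X_free]]]] on_hyp.
have Xu : X \in unitmx by rewrite -row_free_unit.
have X_s : X *m s^T = 0.
  apply/matrixP => i j; rewrite (ord1 j) !mxE.
  have : dotv s (row i X) = 0.
    by have := on_hyp _ (Srow i); rewrite dotvD on_hyp //; lra.
  by apply: etrans; apply: eq_bigr => k _; rewrite !mxE mulrC.
by apply: trmx_inj; rewrite -(mulKmx Xu s^T) X_s mulmx0 trmx0.
Qed.

End FullDimension.

(* Otherwise the functional with signs s = (sgn z_i)_{i <> N}, s_N = 1, is >= 1 on the
   intersection (through x - z) and <= 1 (through x), so it would lie in a hyperplane. *)
Lemma full_dim_inter_bound (R : realType) (n : nat) (N : 'I_n) (z : 'rV[R]_n) :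
  dim_eq (inter (diamond R n) (translate z (diamond R n))) n ->
  z 0 N + lateral_norm N z < 2.
Proof.
move=> [full_dim _]; rewrite ltNge; apply/negP => z_ge2.
pose s : 'rV[R]_n := \row_i (if i == N then 1 else if 0 <= z 0 i then 1 else -1).
have s_norm1 i : `|s 0 i| = 1.
  by rewrite mxE; case: (i == N); last case: ifP; rewrite ?normrN normr1.
have dot_sz : dotv s z = z 0 N + lateral_norm N z.
  rewrite /dotv (bigD1 N) //= mxE eqxx mul1r; congr (_ + _).
  apply: eq_bigr => i /negbTE iN.
  rewrite mxE iN; case: ifP => [z_ge0|/negbT]; first by rewrite mul1r ger0_norm.
  by rewrite -ltNge => z_lt0; rewrite mulN1r ltr0_norm.
have s_le1 i : `|s 0 i| <= 1 by rewrite s_norm1.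
have s0 : s = 0.
  apply: (aff_indep_pts_hyperplane (c := 1) full_dim) => x [Dx /translateP Dxz].
  have le_x := le_trans (dotv_le_l1norm x s_le1) (diamond_l1norm Dx).
  have : - dotv s (x - z) <= 1.
    rewrite -dotvN; apply: le_trans (dotv_le_l1norm _ s_le1) _.
    by rewrite l1normN diamond_l1norm.
  rewrite dotvD dotvN dot_sz; lra.
by have := s_norm1 N; rewrite s0 mxE normr0 => /eqP; rewrite eq_sym oner_eq0.
Qed.

Lemma scaling_window (R : realType) (m : R) : m < 2 ->
  exists2 eps, 0 < eps & forall lam, 1 - eps < lam < 1 + eps -> 0 < lam /\ lam * m < 2.
Proof.
move=> m_lt2; have den_gt0 : 0 < 2 + `|m| by have := normr_ge0 m; lra.
exists ((2 - m) / (2 + `|m|)); first by rewrite divr_gt0 // subr_gt0.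
move=> lam /andP[lam_gt lam_lt].
have eps_le1 : (2 - m) / (2 + `|m|) <= 1.
  by rewrite ler_pdivrMr // mul1r; have := ler_norm (- m); rewrite normrN; lra.
split; first lra.
have [m_le0|m_gt0] := lerP m 0; first nra.
apply: lt_trans (_ : (1 + (2 - m) / (2 + `|m|)) * m < 2).
  by rewrite ltr_pM2r.
rewrite gtr0_norm // (_ : _ * m = 4 * m / (2 + m)); last by field; rewrite gt_eqF //; lra.
by rewrite ltr_pdivrMr; lra.
Qed.

Theorem lemma6p4 (R : realType) (n : nat) :
  (forall (C D : vset R n) (x1 x2 x3 : 'rV[R]_n),
      is_cone C -> is_cone D ->
      x1 <> x2 -> x1 <> x3 -> x2 <> x3 ->
      collinear x1 x2 x3 -> ~ segment x1 x2 x3 ->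
      homothetic (inter (translate x1 C) (translate x3 D))
                 (inter (translate x2 C) (translate x3 D)))
  /\
  ((2 <= n)%N -> forall z : 'rV[R]_n,
      dim_eq (inter (diamond R n) (translate z (diamond R n))) n ->
      exists eps : R, 0 < eps /\
        forall lam : R, 1 - eps < lam < 1 + eps ->
          normal_fan
            (inter (translate (evec R n n.-1)
                      (conic_hull (translate (- evec R n n.-1) (diamond R n))))
                   (translate (lam *: z - evec R n n.-1)
                      (conic_hull (translate (evec R n n.-1) (diamond R n)))))
          = normal_fan
            (inter (translate (evec R n n.-1)
                      (conic_hull (translate (- evec R n n.-1) (diamond R n))))
                   (translate (z - evec R n n.-1)
                      (conic_hull (translate (evec R n n.-1) (diamond R n)))))).
Proof.
split.
  move=> C D x1 x2 x3 hC hD _ _ _ col nseg.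
  have [l lp hx] := collinear_outside_segment col nseg.
  by apply: homothetic_inter_translate lp hx => c v; exact: is_cone_scale.
move=> n_ge2 z full_dim.
have lt_n1n : (n.-1 < n)%N by rewrite prednK // ltnW.
pose N := Ordinal lt_n1n.
have [eps eps_gt0 window] := scaling_window (full_dim_inter_bound N full_dim).
exists eps; split=> // lam /window [lam_gt0 lam_m].
have w_lam := diamond_weight_gt0 lam_m.
have w_1 : 0 < diamond_weight N z 1.
  by apply: diamond_weight_gt0; rewrite mul1r; exact: full_dim_inter_bound.
change (normal_fan (cones_cap N (lam *: z)) = normal_fan (cones_cap N z)).
rewrite -{2}[z]scale1r !cones_cap_minkowski //.
exact: (normal_fan_minkowski (@zonotope_convex _ _ N z) (@lowered_diamond_convex _ _ N)
  _ _ lam_gt0 w_lam ltr01 w_1).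
Qed.
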